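(* Let $m\geq 1$ be an integer, $\omega\in[-1,1]$, and $$W_{m,\omega}(x)=m-1-\frac{m}{1-x}+\frac{1-\omega x}{(1-x)^{m+1}(1-2\omega x+x^2)}\qquad(0\le x<1).$$ Then for all real $x,y\geq 0$ with $x+y<1$, $$W_{m,\omega}(x)+W_{m,\omega}(y)\leq W_{m,\omega}(x+y).$$ *)

From Stdlib Require Import Reals.
Open Scope R_scope.

Definition W (m : nat) (omega x : R) : R :=
  INR m - 1 - INR m / (1 - x)
  + (1 - omega * x) / ((1 - x) ^ (m + 1) * (1 - 2 * omega * x + x ^ 2)).

(* A function f on [0,1) with f 0 = 0 whose slope f(x)/x is nondecreasing
   ("star-shaped" at 0) is superadditive: f x <= x/(x+y) f(x+y) and
   f y <= y/(x+y) f(x+y).  We therefore show that every W_m := W_{m,omega}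
   with m >= 1 is nonnegative and star-shaped, by induction on m:
   - W_1 x = x q(x) where q is nondecreasing on [0,1); this is proved with
     the mean value theorem, the derivative of q having a numerator that is a
     quadratic in 1 - omega with nonpositive discriminant (or all of whose
     coefficients are nonnegative);
   - W_{m+1} x = W_m x / (1-x) + x (m x / (1-x)^2), and star-shaped
     nonnegative functions are stable under multiplication by nonnegative
     nondecreasing functions and under sums.
   The file first develops these closure properties, then the analysis of q,
   then the recurrence, and finally derives the theorem. *)

From Stdlib Require Import Reals Lra Psatz.
From Coquelicot Require Import Coquelicot.
Open Scope R_scope.

Definition nonneg_on (f : R -> R) : Prop :=
  forall x, 0 <= x < 1 -> 0 <= f x.

Definition nondecreasing_on (f : R -> R) : Prop :=
  forall x s, 0 <= x -> x <= s -> s < 1 -> f x <= f s.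

(* The slope f(x)/x is nondecreasing, written without division. *)
Definition star_shaped (f : R -> R) : Prop :=
  forall x s, 0 <= x -> x <= s -> s < 1 -> f x * s <= f s * x.

Lemma superadditive_of_star_shaped (f : R -> R) (x y : R) :
  f 0 = 0 -> star_shaped f ->
  0 <= x -> 0 <= y -> x + y < 1 -> f x + f y <= f (x + y).
Proof.
intros f0 Hf Hx Hy Hxy.
destruct (Req_dec (x + y) 0) as [Hz | Hz].
- assert (x = 0) by lra; assert (y = 0) by lra; subst.
  rewrite Rplus_0_r, f0; lra.
- pose proof (Hf x (x + y) Hx ltac:(lra) Hxy) as Hfx.
  pose proof (Hf y (x + y) Hy ltac:(lra) Hxy) as Hfy.
  apply (Rmult_le_reg_r (x + y)); lra.
Qed.

Lemma star_shaped_ext (f g : R -> R) :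
  (forall x, 0 <= x < 1 -> f x = g x) -> star_shaped f -> star_shaped g.
Proof.
intros Efg Hf x s Hx Hxs Hs.
rewrite <- !Efg by lra; exact (Hf x s Hx Hxs Hs).
Qed.

Lemma star_shaped_id : star_shaped (fun x => x).
Proof. intros x s _ _ _; lra. Qed.

Lemma star_shaped_plus (f g : R -> R) :
  star_shaped f -> star_shaped g -> star_shaped (fun x => f x + g x).
Proof.
intros Hf Hg x s Hx Hxs Hs.
pose proof (Hf x s Hx Hxs Hs); pose proof (Hg x s Hx Hxs Hs); lra.
Qed.

Lemma star_shaped_mul (f g : R -> R) :
  nonneg_on f -> star_shaped f -> nonneg_on g -> nondecreasing_on g ->
  star_shaped (fun x => f x * g x).
Proof.
intros f_ge0 Hf g_ge0 Hg x s Hx Hxs Hs.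
pose proof (Hf x s Hx Hxs Hs) as Hfxs.
pose proof (Hg x s Hx Hxs Hs) as Hgxs.
pose proof (f_ge0 s ltac:(lra)); pose proof (g_ge0 x ltac:(lra)).
apply Rle_trans with (f s * x * g x).
- replace (f x * g x * s) with (f x * s * g x) by ring.
  apply Rmult_le_compat_r; lra.
- replace (f s * g s * x) with (f s * x * g s) by ring.
  apply Rmult_le_compat_l; nra.
Qed.

Lemma nondecreasing_mul (f g : R -> R) :
  nonneg_on f -> nondecreasing_on f -> nonneg_on g -> nondecreasing_on g ->
  nondecreasing_on (fun x => f x * g x).
Proof.
intros f_ge0 Hf g_ge0 Hg x s Hx Hxs Hs.
apply Rmult_le_compat; auto with real; [apply f_ge0 | apply g_ge0]; lra.
Qed.

Lemma nonneg_inv_one_minus : nonneg_on (fun x => / (1 - x)).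
Proof. intros x Hx; apply Rlt_le, Rinv_0_lt_compat; lra. Qed.

Lemma nondecreasing_inv_one_minus : nondecreasing_on (fun x => / (1 - x)).
Proof. intros x s Hx Hxs Hs; apply Rinv_le_contravar; lra. Qed.

Lemma nondecreasing_of_derive (f df : R -> R) :
  (forall x, 0 <= x < 1 -> is_derive f x (df x)) -> nonneg_on df ->
  nondecreasing_on f.
Proof.
intros Hder Hdf x s Hx Hxs Hs.
destruct (Req_dec x s) as [-> | Hne]; [lra |].
destruct (MVT_cor2 f df x s) as [c [Hc Hcxs]]; [lra | |].
- intros c Hc; apply is_derive_Reals, Hder; lra.
- pose proof (Hdf c ltac:(lra)); nra.
Qed.

Definition quad_den (w x : R) : R := 1 - 2 * w * x + x ^ 2.
Definition quad_num (w x : R) : R := 1 + w - (1 + 2 * w) * x + x ^ 2.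
Definition q (w x : R) : R := quad_num w x / ((1 - x) ^ 2 * quad_den w x).

Definition q_deriv_num (w x : R) : R :=
  2 * quad_den w x ^ 2 + quad_den w x * (2 * w - 1 - x)
  + 2 * (1 - x) * (w - x) ^ 2.

Definition q_deriv (w x : R) : R :=
  q_deriv_num w x / ((1 - x) ^ 3 * quad_den w x ^ 2).

Lemma quad_den_pos (w x : R) : -1 <= w <= 1 -> 0 <= x < 1 -> 0 < quad_den w x.
Proof. intros; unfold quad_den; nra. Qed.

Lemma quad_num_nonneg (w x : R) :
  -1 <= w <= 1 -> 0 <= x < 1 -> 0 <= quad_num w x.
Proof. intros; unfold quad_num; destruct (Rle_lt_dec x (1 / 2)); nra. Qed.

Lemma quadratic_nonneg (A B C a : R) :
  0 < A -> B ^ 2 <= 4 * A * C -> 0 <= A * a ^ 2 + B * a + C.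
Proof.
intros HA Hdisc.
assert (Hsq : 4 * A * (A * a ^ 2 + B * a + C) = (2 * A * a + B) ^ 2 + (4 * A * C - B ^ 2))
  by ring.
pose proof (pow2_ge_0 (2 * A * a + B)).
apply (Rmult_le_reg_l (4 * A)); lra.
Qed.

(* In the variables a = 1 - w in [0,2] and s = 1 - x in (0,1], the
   derivative numerator of q is this quadratic in a. *)
Lemma q_deriv_num_poly_nonneg (a s : R) :
  0 <= a <= 2 -> 0 < s <= 1 ->
  0 <= (8 * s ^ 2 - 10 * s + 4) * a ^ 2 + (2 * s - 8 * s ^ 3) * a
       + (2 * s ^ 4 + 3 * s ^ 3).
Proof.
intros Ha Hs.
assert (HA : 0 < 8 * s ^ 2 - 10 * s + 4) by nra.
destruct (Rle_lt_dec s (1 / 2)) as [Hsmall | Hlarge].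
- (* all three coefficients are nonnegative *)
  assert (0 <= 2 * s - 8 * s ^ 3) by nra.
  assert (0 <= s ^ 3) by (apply pow_le; lra).
  assert (0 <= s ^ 4) by (apply pow_le; lra).
  assert (0 <= (8 * s ^ 2 - 10 * s + 4) * a ^ 2) by nra.
  nra.
- (* the discriminant 4 s^2 (1 - 12 s + 14 s^2 - 4 s^3) is negative *)
  apply quadratic_nonneg; [exact HA |].
  assert (Hcubic : 1 - 12 * s + 14 * s ^ 2 - 4 * s ^ 3 < 0) by nra.
  assert (0 < s ^ 2) by (apply pow_lt; lra).
  replace ((2 * s - 8 * s ^ 3) ^ 2) with
    (4 * (8 * s ^ 2 - 10 * s + 4) * (2 * s ^ 4 + 3 * s ^ 3)
     + 4 * s ^ 2 * (1 - 12 * s + 14 * s ^ 2 - 4 * s ^ 3)) by ring.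
  nra.
Qed.

Lemma q_deriv_num_nonneg (w x : R) :
  -1 <= w <= 1 -> 0 <= x < 1 -> 0 <= q_deriv_num w x.
Proof.
intros Hw Hx.
replace (q_deriv_num w x) with
  ((8 * (1 - x) ^ 2 - 10 * (1 - x) + 4) * (1 - w) ^ 2
   + (2 * (1 - x) - 8 * (1 - x) ^ 3) * (1 - w)
   + (2 * (1 - x) ^ 4 + 3 * (1 - x) ^ 3))
  by (unfold q_deriv_num, quad_den; ring).
apply q_deriv_num_poly_nonneg; lra.
Qed.

Lemma q_has_deriv (w x : R) :
  -1 <= w <= 1 -> 0 <= x < 1 -> is_derive (q w) x (q_deriv w x).
Proof.
intros Hw Hx.
pose proof (quad_den_pos w x Hw Hx) as HD.
unfold q, q_deriv, q_deriv_num, quad_num; unfold quad_den in *.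
auto_derive.
- assert (1 + - x <> 0) by lra.
  assert (1 + - (2 * w * x) + x * (x * 1) <> 0) by lra.
  repeat apply Rmult_integral_contrapositive_currified; lra.
- field; lra.
Qed.

Lemma q_nondecreasing (w : R) : -1 <= w <= 1 -> nondecreasing_on (q w).
Proof.
intros Hw; apply (nondecreasing_of_derive _ (q_deriv w)).
- intros x Hx; exact (q_has_deriv w x Hw Hx).
- intros x Hx; unfold q_deriv.
  pose proof (q_deriv_num_nonneg w x Hw Hx).
  pose proof (quad_den_pos w x Hw Hx).
  apply Rdiv_le_0_compat; [lra |].
  apply Rmult_lt_0_compat; apply pow_lt; lra.
Qed.

Lemma q_nonneg (w : R) : -1 <= w <= 1 -> nonneg_on (q w).
Proof.
intros Hw x Hx; unfold q.
pose proof (quad_num_nonneg w x Hw Hx); pose proof (quad_den_pos w x Hw Hx).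
apply Rdiv_le_0_compat; [lra |].
apply Rmult_lt_0_compat; [apply pow_lt |]; lra.
Qed.

Lemma W1_eq (w x : R) : -1 <= w <= 1 -> 0 <= x < 1 -> x * q w x = W 1 w x.
Proof.
intros Hw Hx; pose proof (quad_den_pos w x Hw Hx).
unfold W, q, quad_num; unfold quad_den in *; simpl INR.
change (1 + 1)%nat with 2%nat.
field; lra.
Qed.

Lemma W_succ (m : nat) (w x : R) : -1 <= w <= 1 -> 0 <= x < 1 ->
  W m w x * / (1 - x) + x * (INR m * x * / (1 - x) * / (1 - x)) = W (S m) w x.
Proof.
intros Hw Hx; pose proof (quad_den_pos w x Hw Hx).
unfold W; unfold quad_den in *.
rewrite S_INR; replace (S m + 1)%nat with (S (m + 1)) by lia; simpl pow.
assert ((1 - x) ^ (m + 1) <> 0) by (apply pow_nonzero; lra).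
field; lra.
Qed.

Lemma increment_shape (m : nat) :
  nonneg_on (fun x => INR m * x * / (1 - x) * / (1 - x)) /\
  nondecreasing_on (fun x => INR m * x * / (1 - x) * / (1 - x)).
Proof.
pose proof (pos_INR m) as Hm.
pose proof nonneg_inv_one_minus as Hinv.
assert (Hlin : nonneg_on (fun x => INR m * x)) by (intros x Hx; nra).
assert (Hlin' : nondecreasing_on (fun x => INR m * x)) by (intros x s ? ? ?; nra).
assert (Hprod : nonneg_on (fun x => INR m * x * / (1 - x)))
  by (intros x Hx; apply Rmult_le_pos; [apply Hlin | apply Hinv]; lra).
split.
- intros x Hx; apply Rmult_le_pos; [apply Hprod | apply Hinv]; lra.
- apply nondecreasing_mul; [exact Hprod | | exact Hinv | exact nondecreasing_inv_one_minus].
  apply nondecreasing_mul; [exact Hlin | exact Hlin' | exact Hinv |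
                            exact nondecreasing_inv_one_minus].
Qed.

Lemma W_shape (m : nat) (w : R) : (1 <= m)%nat -> -1 <= w <= 1 ->
  nonneg_on (W m w) /\ star_shaped (W m w).
Proof.
intros Hm Hw.
induction Hm as [| m Hm [IHnonneg IHstar]].
- split.
  + intros x Hx; rewrite <- W1_eq by lra.
    apply Rmult_le_pos; [lra | apply q_nonneg; lra].
  + apply (star_shaped_ext (fun x => x * q w x)); [intros x Hx; apply W1_eq; lra |].
    apply star_shaped_mul;
      [intros x Hx; lra | exact star_shaped_id | apply q_nonneg, Hw | apply q_nondecreasing, Hw].
- destruct (increment_shape m) as [Hinc_ge0 Hinc_mono].
  pose proof nonneg_inv_one_minus as Hinv.
  split.
  + intros x Hx; rewrite <- W_succ by lra.
    pose proof (IHnonneg x Hx); pose proof (Hinv x Hx); pose proof (Hinc_ge0 x Hx).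
    apply Rplus_le_le_0_compat; apply Rmult_le_pos; lra.
  + eapply star_shaped_ext; [intros x Hx; apply W_succ; lra |].
    apply star_shaped_plus.
    * apply star_shaped_mul;
        [exact IHnonneg | exact IHstar | exact Hinv | exact nondecreasing_inv_one_minus].
    * apply star_shaped_mul;
        [intros x Hx; lra | exact star_shaped_id | exact Hinc_ge0 | exact Hinc_mono].
Qed.

Lemma W_at_0 (m : nat) (w : R) : W m w 0 = 0.
Proof. unfold W; rewrite Rminus_0_r, pow1; field. Qed.

Theorem mainTheorem9 (m : nat) (omega x y : R) :
  (1 <= m)%nat -> -1 <= omega <= 1 ->
  0 <= x -> 0 <= y -> x + y < 1 ->
  W m omega x + W m omega y <= W m omega (x + y).
Proof.
intros Hm Hw Hx Hy Hxy.
destruct (W_shape m omega Hm Hw) as [_ Hstar].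
exact (superadditive_of_star_shaped (W m omega) x y (W_at_0 m omega) Hstar Hx Hy Hxy).
Qed.
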